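(* Consider the interior permanent magnet synchronous machine with state $x=(i_{s\alpha},i_{s\beta},\omega,\theta)^T$, input $v=(v_{s\alpha},v_{s\beta})^T$, output $y=(i_{s\alpha},i_{s\beta})^T$, given by $$\frac{d}{dt}\Big(L(\theta)\,i_{s\alpha\beta}+\psi_r\begin{bmatrix}\cos\theta\\ \sin\theta\end{bmatrix}\Big)=v-R_s\,i_{s\alpha\beta},\qquad\dot\omega=0,\qquad\dot\theta=\omega,$$ with $L(\theta)=\begin{bmatrix}L_0+L_2\cos2\theta & L_2\sin2\theta\\ L_2\sin2\theta & L_0-L_2\cos2\theta\end{bmatrix}$, $L_d=L_0+L_2>0$, $L_q=L_0-L_2>0$, $L_\Delta=L_d-L_q$, and constants $R_s$, $\psi_r$. Let $\mathcal{O}(x)$ be the $4\times4$ matrix whose rows are the gradients with respect to $x$ of $i_{s\alpha}$, $i_{s\beta}$, $\mathcal{L}_fi_{s\alpha}$, $\mathcal{L}_fi_{s\beta}$. With $i_{sd},i_{sq}$ defined by $\begin{bmatrix}i_{s\alpha}\\ i_{s\beta}\end{bmatrix}=\begin{bmatrix}\cos\theta&-\sin\theta\\ \sin\theta&\cos\theta\end{bmatrix}\begin{bmatrix}i_{sd}\\ i_{sq}\end{bmatrix}$ and $\frac{di_{sd}}{dt},\frac{di_{sq}}{dt}$ their time derivatives along the model, one has $$\det\mathcal{O}(x)=\frac{1}{L_dL_q}\Big[(L_\Delta i_{sd}+\psi_r)^2+L_\Delta^2i_{sq}^2\Big]\omega+\frac{L_\Delta}{L_dL_q}\Big[L_\Delta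 i_{sq}\frac{di_{sd}}{dt}-(L_\Delta i_{sd}+\psi_r)\frac{di_{sq}}{dt}\Big].$$ In particular, for the surface PMSM ($L_2=0$, $L_d=L_q=L_0$): $\det\mathcal{O}=\frac{\psi_r^2}{L_0^2}\omega$; and for the synchronous reluctance machine ($\psi_r=0$): $\det\mathcal{O}=\frac{L_\Delta^2}{L_dL_q}\big[(i_{sd}^2+i_{sq}^2)\omega+\frac{di_{sd}}{dt}i_{sq}-i_{sd}\frac{di_{sq}}{dt}\big]$.
   Context: The Lie derivative $\mathcal{L}_fh$ of an output component $h$ along $\dot x=f(x,u)$ is $\frac{\partial h}{\partial x}f(x,u)$; here $f$ is obtained by solving the flux equation for $\frac{d}{dt}i_{s\alpha\beta}$. *)

From Stdlib Require Import Reals.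
Open Scope R_scope.

Definition L11 (L0 L2 th : R) : R := L0 + L2 * cos (2 * th).
Definition L12 (L0 L2 th : R) : R := L2 * sin (2 * th).
Definition L22 (L0 L2 th : R) : R := L0 - L2 * cos (2 * th).

Definition dL11 (L2 th : R) : R := - 2 * L2 * sin (2 * th).
Definition dL12 (L2 th : R) : R := 2 * L2 * cos (2 * th).
Definition dL22 (L2 th : R) : R := 2 * L2 * sin (2 * th).

(* Expanding the flux equation with dth/dt = w:
     L(th) di/dt + w (dL/dth) i + psi w (-sin th, cos th) = v - Rs i,
   i.e.  L(th) di/dt = rhs  with rhs below. *)
Definition rhs1 (L0 L2 Rs psi ia ib w th va : R) : R :=
  va - Rs * ia - w * (dL11 L2 th * ia + dL12 L2 th * ib) - psi * w * (- sin th).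
Definition rhs2 (L0 L2 Rs psi ia ib w th vb : R) : R :=
  vb - Rs * ib - w * (dL12 L2 th * ia + dL22 L2 th * ib) - psi * w * cos th.

Definition detL (L0 L2 th : R) : R :=
  L11 L0 L2 th * L22 L0 L2 th - L12 L0 L2 th * L12 L0 L2 th.

(* Solving the flux equation for d i_{s alpha beta}/dt: the current components
   of the vector field f(x, v)  (f = (f1, f2, 0, w)). *)
Definition f1 (L0 L2 Rs psi va vb ia ib w th : R) : R :=
  (L22 L0 L2 th * rhs1 L0 L2 Rs psi ia ib w th va
   - L12 L0 L2 th * rhs2 L0 L2 Rs psi ia ib w th vb) / detL L0 L2 th.
Definition f2 (L0 L2 Rs psi va vb ia ib w th : R) : R :=
  (- L12 L0 L2 th * rhs1 L0 L2 Rs psi ia ib w th va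
   + L11 L0 L2 th * rhs2 L0 L2 Rs psi ia ib w th vb) / detL L0 L2 th.

(* Lie derivatives of the outputs along f: L_f ia = grad(ia).f = f1, L_f ib = f2. *)
Definition Lf_ia (L0 L2 Rs psi va vb : R) : R -> R -> R -> R -> R :=
  f1 L0 L2 Rs psi va vb.
Definition Lf_ib (L0 L2 Rs psi va vb : R) : R -> R -> R -> R -> R :=
  f2 L0 L2 Rs psi va vb.

Definition is_grad (g : R -> R -> R -> R -> R) (a b c d : R) (d1 d2 d3 d4 : R) : Prop :=
  derivable_pt_lim (fun z => g z b c d) a d1 /\
  derivable_pt_lim (fun z => g a z c d) b d2 /\
  derivable_pt_lim (fun z => g a b z d) c d3 /\
  derivable_pt_lim (fun z => g a b c z) d d4.

Definition det3 (a b c d e f g h i : R) : R :=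
  a * (e * i - f * h) - b * (d * i - f * g) + c * (d * h - e * g).

Definition det4 (M : nat -> nat -> R) : R :=
    M 0%nat 0%nat * det3 (M 1%nat 1%nat) (M 1%nat 2%nat) (M 1%nat 3%nat)
                         (M 2%nat 1%nat) (M 2%nat 2%nat) (M 2%nat 3%nat)
                         (M 3%nat 1%nat) (M 3%nat 2%nat) (M 3%nat 3%nat)
  - M 0%nat 1%nat * det3 (M 1%nat 0%nat) (M 1%nat 2%nat) (M 1%nat 3%nat)
                         (M 2%nat 0%nat) (M 2%nat 2%nat) (M 2%nat 3%nat)
                         (M 3%nat 0%nat) (M 3%nat 2%nat) (M 3%nat 3%nat)
  + M 0%nat 2%nat * det3 (M 1%nat 0%nat) (M 1%nat 1%nat) (M 1%nat 3%nat)
                         (M 2%nat 0%nat) (M 2%nat 1%nat) (M 2%nat 3%nat)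
                         (M 3%nat 0%nat) (M 3%nat 1%nat) (M 3%nat 3%nat)
  - M 0%nat 3%nat * det3 (M 1%nat 0%nat) (M 1%nat 1%nat) (M 1%nat 2%nat)
                         (M 2%nat 0%nat) (M 2%nat 1%nat) (M 2%nat 2%nat)
                         (M 3%nat 0%nat) (M 3%nat 1%nat) (M 3%nat 2%nat).

Definition detO_is (L0 L2 Rs psi va vb ia ib w th D : R) : Prop :=
  exists M : nat -> nat -> R,
    is_grad (fun a _ _ _ => a) ia ib w th (M 0%nat 0%nat) (M 0%nat 1%nat) (M 0%nat 2%nat) (M 0%nat 3%nat) /\
    is_grad (fun _ b _ _ => b) ia ib w th (M 1%nat 0%nat) (M 1%nat 1%nat) (M 1%nat 2%nat) (M 1%nat 3%nat) /\
    is_grad (Lf_ia L0 L2 Rs psi va vb) ia ib w th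
            (M 2%nat 0%nat) (M 2%nat 1%nat) (M 2%nat 2%nat) (M 2%nat 3%nat) /\
    is_grad (Lf_ib L0 L2 Rs psi va vb) ia ib w th
            (M 3%nat 0%nat) (M 3%nat 1%nat) (M 3%nat 2%nat) (M 3%nat 3%nat) /\
    det4 M = D.

(* Rotor-frame currents: i_ab = Rot(th) i_dq, so i_dq = Rot(-th) i_ab. *)
Definition isd (ia ib th : R) : R := cos th * ia + sin th * ib.
Definition isq (ia ib th : R) : R := - sin th * ia + cos th * ib.

(* Time derivatives of isd, isq along the model (chain rule with
   dth/dt = w, d ia/dt = f1, d ib/dt = f2). *)
Definition disd (L0 L2 Rs psi va vb ia ib w th : R) : R :=
  w * (- sin th * ia + cos th * ib)
  + cos th * f1 L0 L2 Rs psi va vb ia ib w th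
  + sin th * f2 L0 L2 Rs psi va vb ia ib w th.
Definition disq (L0 L2 Rs psi va vb ia ib w th : R) : R :=
  w * (- cos th * ia - sin th * ib)
  - sin th * f1 L0 L2 Rs psi va vb ia ib w th
  + cos th * f2 L0 L2 Rs psi va vb ia ib w th.

From Stdlib Require Import Nsatz Reals Lra.
From Coquelicot Require Import Coquelicot.
Open Scope R_scope.

(* Since the first two rows of O(x) are unit vectors, det O is the 2x2
   determinant of the columns (d f/d w, d f/d th), where f = d i_ab/dt.
   This determinant is invariant under the rotation R(th), so it can be
   computed from u = R(-th) f, the current derivative read in rotor axes.
   In those axes the inductance is diag(Ld, Lq) and the flux equation reads
   diag(Ld, Lq) u = v_dq - Rs i_dq - w (LD i_q, LD i_d + psi); differentiating
   this in w and th gives entries that are rational in i_dq, v_dq and w, and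
   eliminating v_dq through d i_dq/dt = u - w J i_dq yields the formula. *)

Definition obs_matrix (a0 a1 a2 a3 b0 b1 b2 b3 : R) : nat -> nat -> R :=
  fun i j => match i, j with
  | 0, 0 | 1, 1 => 1
  | 2, 0 => a0 | 2, 1 => a1 | 2, 2 => a2 | 2, 3 => a3
  | 3, 0 => b0 | 3, 1 => b1 | 3, 2 => b2 | 3, 3 => b3
  | _, _ => 0
  end.

Lemma det4_obs_matrix a0 a1 a2 a3 b0 b1 b2 b3 :
  det4 (obs_matrix a0 a1 a2 a3 b0 b1 b2 b3) = a2 * b3 - a3 * b2.
Proof. unfold det4, det3; simpl; ring. Qed.

Lemma detO_is_intro L0 L2 Rs psi va vb ia ib w th a0 a1 a2 a3 b0 b1 b2 b3 :
  is_grad (Lf_ia L0 L2 Rs psi va vb) ia ib w th a0 a1 a2 a3 ->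
  is_grad (Lf_ib L0 L2 Rs psi va vb) ia ib w th b0 b1 b2 b3 ->
  detO_is L0 L2 Rs psi va vb ia ib w th (a2 * b3 - a3 * b2).
Proof.
intros Ha Hb; exists (obs_matrix a0 a1 a2 a3 b0 b1 b2 b3).
split; [|split; [|split; [|split]]]; auto using det4_obs_matrix;
  repeat split; solve [apply derivable_pt_lim_id | apply derivable_pt_lim_const].
Qed.

Lemma cos_sin_sqr th : cos th * cos th + sin th * sin th = 1.
Proof. pose proof (sin2_cos2 th) as E; unfold Rsqr in E; lra. Qed.

Lemma det2_rotate c s x1 x2 y1 y2 : c * c + s * s = 1 ->
  (c * x1 - s * x2) * (s * y1 + c * y2) - (c * y1 - s * y2) * (s * x1 + c * x2)
  = x1 * y2 - x2 * y1.
Proof. intros E; nsatz. Qed.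

Section RotorFrame.

Variables L0 L2 Rs psi va vb : R.
Hypotheses (Ld_pos : 0 < L0 + L2) (Lq_pos : 0 < L0 - L2).

Local Notation Ld := (L0 + L2).
Local Notation Lq := (L0 - L2).
Local Notation LD := (L0 + L2 - (L0 - L2)).

(* The components of u = R(-th) f; see [f_eq_rotor]. *)
Definition f_d (ia ib w th : R) : R :=
  (isd va vb th - Rs * isd ia ib th - w * LD * isq ia ib th) / Ld.
Definition f_q (ia ib w th : R) : R :=
  (isq va vb th - Rs * isq ia ib th - w * (LD * isd ia ib th + psi)) / Lq.

Definition df_d_dw (ia ib th : R) : R := - (LD * isq ia ib th) / Ld.
Definition df_q_dw (ia ib th : R) : R := - (LD * isd ia ib th + psi) / Lq.
Definition df_d_dth (ia ib w th : R) : R :=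
  (isq va vb th - Rs * isq ia ib th + w * LD * isd ia ib th) / Ld.
Definition df_q_dth (ia ib w th : R) : R :=
  (- isd va vb th + Rs * isd ia ib th - w * LD * isq ia ib th) / Lq.

Lemma detL_eq th : detL L0 L2 th = Ld * Lq.
Proof.
unfold detL, L11, L12, L22; pose proof (cos_sin_sqr (2 * th)); nra.
Qed.

Lemma f_eq_rotor ia ib w th :
  f1 L0 L2 Rs psi va vb ia ib w th = cos th * f_d ia ib w th - sin th * f_q ia ib w th /\
  f2 L0 L2 Rs psi va vb ia ib w th = sin th * f_d ia ib w th + cos th * f_q ia ib w th.
Proof.
unfold f1, f2; rewrite detL_eq.
unfold f_d, f_q, rhs1, rhs2, L11, L12, L22, dL11, dL12, dL22, isd, isq.
rewrite sin_2a, cos_2a; pose proof (cos_sin_sqr th) as E.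
assert (Id : Ld * / Ld = 1) by (field; lra).
assert (Iq : Lq * / Lq = 1) by (field; lra).
unfold Rdiv; rewrite Rinv_mult.
set (c := cos th) in *; set (s := sin th) in *.
set (kd := / Ld) in *; set (kq := / Lq) in *.
split; nsatz.
Qed.

(* The partials in ia and ib only need to exist: they do not enter det O.
   The th-partial is R(th) (d u/d th + J u), with J the rotation by pi/2. *)
Lemma f1_is_grad ia ib w th :
  is_grad (f1 L0 L2 Rs psi va vb) ia ib w th
    (Derive (fun z => f1 L0 L2 Rs psi va vb z ib w th) ia)
    (Derive (fun z => f1 L0 L2 Rs psi va vb ia z w th) ib)
    (cos th * df_d_dw ia ib th - sin th * df_q_dw ia ib th)
    (cos th * (df_d_dth ia ib w th - f_q ia ib w th)
     - sin th * (df_q_dth ia ib w th + f_d ia ib w th)).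
Proof.
assert (E : forall a b x y, cos y * f_d a b x y - sin y * f_q a b x y
                            = f1 L0 L2 Rs psi va vb a b x y)
  by (intros; symmetry; apply f_eq_rotor).
repeat split; apply is_derive_Reals; try apply Derive_correct;
  [eapply ex_derive_ext | eapply ex_derive_ext | eapply is_derive_ext | eapply is_derive_ext];
  try (intros; apply E);
  unfold f_d, f_q, df_d_dw, df_q_dw, df_d_dth, df_q_dth, isd, isq; auto_derive; auto; field; lra.
Qed.

Lemma f2_is_grad ia ib w th :
  is_grad (f2 L0 L2 Rs psi va vb) ia ib w th
    (Derive (fun z => f2 L0 L2 Rs psi va vb z ib w th) ia)
    (Derive (fun z => f2 L0 L2 Rs psi va vb ia z w th) ib)
    (sin th * df_d_dw ia ib th + cos th * df_q_dw ia ib th)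
    (sin th * (df_d_dth ia ib w th - f_q ia ib w th)
     + cos th * (df_q_dth ia ib w th + f_d ia ib w th)).
Proof.
assert (E : forall a b x y, sin y * f_d a b x y + cos y * f_q a b x y
                            = f2 L0 L2 Rs psi va vb a b x y)
  by (intros; symmetry; apply f_eq_rotor).
repeat split; apply is_derive_Reals; try apply Derive_correct;
  [eapply ex_derive_ext | eapply ex_derive_ext | eapply is_derive_ext | eapply is_derive_ext];
  try (intros; apply E);
  unfold f_d, f_q, df_d_dw, df_q_dw, df_d_dth, df_q_dth, isd, isq; auto_derive; auto; field; lra.
Qed.

Lemma disd_rotor ia ib w th :
  disd L0 L2 Rs psi va vb ia ib w th = w * isq ia ib th + f_d ia ib w th.
Proof.
unfold disd, isq; destruct (f_eq_rotor ia ib w th) as [-> ->].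
pose proof (cos_sin_sqr th); nsatz.
Qed.

Lemma disq_rotor ia ib w th :
  disq L0 L2 Rs psi va vb ia ib w th = - w * isd ia ib th + f_q ia ib w th.
Proof.
unfold disq, isd; destruct (f_eq_rotor ia ib w th) as [-> ->].
pose proof (cos_sin_sqr th); nsatz.
Qed.

Lemma rotor_det_eq ia ib w th :
  df_d_dw ia ib th * (df_q_dth ia ib w th + f_d ia ib w th)
  - df_q_dw ia ib th * (df_d_dth ia ib w th - f_q ia ib w th)
  = 1 / (Ld * Lq) * ((LD * isd ia ib th + psi) ^ 2 + LD ^ 2 * isq ia ib th ^ 2) * w
    + LD / (Ld * Lq) * (LD * isq ia ib th * (w * isq ia ib th + f_d ia ib w th)
                        - (LD * isd ia ib th + psi) * (- w * isd ia ib th + f_q ia ib w th)).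
Proof. unfold f_d, f_q, df_d_dw, df_q_dw, df_d_dth, df_q_dth; field; lra. Qed.

Lemma detO_is_formula ia ib w th :
  detO_is L0 L2 Rs psi va vb ia ib w th
    (1 / (Ld * Lq) * ((LD * isd ia ib th + psi) ^ 2 + LD ^ 2 * isq ia ib th ^ 2) * w
     + LD / (Ld * Lq) * (LD * isq ia ib th * disd L0 L2 Rs psi va vb ia ib w th
                         - (LD * isd ia ib th + psi) * disq L0 L2 Rs psi va vb ia ib w th)).
Proof.
rewrite disd_rotor, disq_rotor, <- rotor_det_eq.
rewrite <- (det2_rotate (cos th) (sin th) (df_d_dw ia ib th) (df_q_dw ia ib th)
             (df_d_dth ia ib w th - f_q ia ib w th) (df_q_dth ia ib w th + f_d ia ib w th))
  by apply cos_sin_sqr.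
eapply detO_is_intro; [apply f1_is_grad | apply f2_is_grad].
Qed.

End RotorFrame.

Theorem mainTheorem4 :
  (forall L0 L2 Rs psi va vb ia ib w th : R,
     let Ld := L0 + L2 in let Lq := L0 - L2 in let LD := Ld - Lq in
     0 < Ld -> 0 < Lq ->
     let id := isd ia ib th in let iq := isq ia ib th in
     let did := disd L0 L2 Rs psi va vb ia ib w th in
     let diq := disq L0 L2 Rs psi va vb ia ib w th in
     detO_is L0 L2 Rs psi va vb ia ib w th
       (1 / (Ld * Lq) * ((LD * id + psi) ^ 2 + LD ^ 2 * iq ^ 2) * w
        + LD / (Ld * Lq) * (LD * iq * did - (LD * id + psi) * diq)))
  /\
  (* surface PMSM: L2 = 0, Ld = Lq = L0 *)
  (forall L0 Rs psi va vb ia ib w th : R,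
     0 < L0 ->
     detO_is L0 0 Rs psi va vb ia ib w th (psi ^ 2 / L0 ^ 2 * w))
  /\
  (* synchronous reluctance machine: psi = 0 *)
  (forall L0 L2 Rs va vb ia ib w th : R,
     let Ld := L0 + L2 in let Lq := L0 - L2 in let LD := Ld - Lq in
     0 < Ld -> 0 < Lq ->
     let id := isd ia ib th in let iq := isq ia ib th in
     let did := disd L0 L2 Rs 0 va vb ia ib w th in
     let diq := disq L0 L2 Rs 0 va vb ia ib w th in
     detO_is L0 L2 Rs 0 va vb ia ib w th
       (LD ^ 2 / (Ld * Lq) * ((id ^ 2 + iq ^ 2) * w + did * iq - id * diq))).
Proof.
split; [| split].
- intros L0 L2 Rs psi va vb ia ib w th Ld Lq LD Hd Hq.
  exact (detO_is_formula L0 L2 Rs psi va vb Hd Hq ia ib w th).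
- intros L0 Rs psi va vb ia ib w th HL0.
  eapply eq_ind.
  + exact (detO_is_formula L0 0 Rs psi va vb ltac:(lra) ltac:(lra) ia ib w th).
  + field; lra.
- intros L0 L2 Rs va vb ia ib w th Ld Lq LD Hd Hq id iq did diq.
  eapply eq_ind.
  + exact (detO_is_formula L0 L2 Rs 0 va vb Hd Hq ia ib w th).
  + subst Ld Lq LD id iq did diq; field; lra.
Qed.
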